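(* Consider the model below with $\min\{M,M_f,N\}<1$ and $\epsilon_2\ge0$, and fix all parameters other than $\epsilon_1$. (i) There exists $\bar{\epsilon}_{BR}\in[-\infty,\infty)$, depending only on the model parameters, such that for every $\epsilon_1\in\mathbb{R}$ a bounded-rationality equilibrium (BRE) exists if and only if $\epsilon_1\ge\bar{\epsilon}_{BR}$. (ii) If $(M-1)(1-M_f\beta)+\lambda\sigma N<0$, then $\bar{\epsilon}_{BR}=-\infty$, i.e. a BRE exists for every $\epsilon_1\in\mathbb{R}$.
   Context: Parameters: $0<\beta<1$, $\sigma,\lambda,\mu>0$, $\psi>1$, $p,q\in(0,1]$, $M,M_f,N\in(0,1]$. The shock $\epsilon_t$ is a two-state Markov chain on $\{\epsilon_1,\epsilon_2\}$ with $\Pr(\epsilon_{t+1}=\epsilon_1\mid\epsilon_t=\epsilon_1)=p$, $\Pr(\epsilon_{t+1}=\epsilon_2\mid\epsilon_t=\epsilon_2)=q$. Model: $x_t=M E_t x_{t+1}-\sigma(i_t-N E_t\pi_{t+1})+\epsilon_t$, $\pi_t=\lambda x_t+M_f\beta E_t\pi_{t+1}$, $i_t=\max\{\psi\pi_t,-\mu\}$. A BRE is a pair $Y_j=(x_j,\pi_j)\in\mathbb{R}^2$, $j=1,2$, such that for $j=1,2$, with $i_j=\max\{\psi\pi_j,-\mu\}$: $x_j=Mx^e_j-\sigma(i_j-N\pi^e_j)+\epsilon_j$, $\pi_j=\lambda x_j+M_f\beta\pi^e_j$, where $(x^e_1,\pi^e_1)=pY_1+(1-p)Y_2$, $(x^e_2,\pi^e_2)=(1-q)Y_1+qY_2$.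 *)

From Stdlib Require Import Reals.
From Coquelicot Require Import Coquelicot.
Open Scope R_scope.

Definition irate (psi mu pi : R) : R := Rmax (psi * pi) (- mu).

Definition is_BRE (beta sigma lambda mu psi p q M Mf N eps1 eps2 : R)
  (x1 pi1 x2 pi2 : R) : Prop :=
  let xe1 := p * x1 + (1 - p) * x2 in
  let pie1 := p * pi1 + (1 - p) * pi2 in
  let xe2 := (1 - q) * x1 + q * x2 in
  let pie2 := (1 - q) * pi1 + q * pi2 in
  x1 = M * xe1 - sigma * (irate psi mu pi1 - N * pie1) + eps1 /\
  pi1 = lambda * x1 + Mf * beta * pie1 /\
  x2 = M * xe2 - sigma * (irate psi mu pi2 - N * pie2) + eps2 /\
  pi2 = lambda * x2 + Mf * beta * pie2.

Definition BRE_exists (beta sigma lambda mu psi p q M Mf N eps1 eps2 : R) : Prop :=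
  exists x1 pi1 x2 pi2 : R,
    is_BRE beta sigma lambda mu psi p q M Mf N eps1 eps2 x1 pi1 x2 pi2.

From Stdlib Require Import Reals Lra Classical.
From Coquelicot Require Import Coquelicot.
Open Scope R_scope.

(* Solving the Phillips curves for the output gaps turns a BRE into a solution (pi1, pi2) of
   a piecewise-linear system lhs1 = eps1, lhs2 = eps2, in which each pi_j enters its own
   equation through k_j pi_j + sigma max(psi pi_j, -mu) and the other one with a nonpositive
   coefficient.  Every eps1 >= 0 is attained away from the lower bound.  If q < 1, the second
   equation gives pi1 as a function of pi2, so the attainable eps1 form the range of a
   continuous function of pi2 that is affine near both infinities; such a range containing
   [0, +oo) is all of R or [min, +oo).  If q = 1, the second equation bounds pi2 by a value it
   attains, and the attainable eps1 are a shift of the range of pi1 |-> lhs1 pi1 0.  When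
   (M - 1)(1 - Mf beta) + lambda sigma N < 0, the system with both rates at the lower bound
   has positive diagonal and determinant, hence is solved for all very negative eps1. *)

Definition is_up_ray (S : R -> Prop) (c : Rbar) : Prop :=
  c <> p_infty /\ forall e, S e <-> Rbar_le c (Finite e).

Lemma is_up_ray_ext (S S' : R -> Prop) (c : Rbar) :
  (forall e, S e <-> S' e) -> is_up_ray S c -> is_up_ray S' c.
Proof. intros HS [Hc H]; split; [exact Hc|]; intros e; rewrite <- HS; apply H. Qed.

Lemma is_up_ray_up (S : R -> Prop) (c : Rbar) (e e' : R) :
  is_up_ray S c -> S e -> e <= e' -> S e'.
Proof.
  intros [_ H] He Hle; apply H; apply Rbar_le_trans with (Finite e); [now apply H|exact Hle].
Qed.

Lemma is_up_ray_shift (S : R -> Prop) (c : Rbar) (d : R) :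
  is_up_ray S c -> exists c', is_up_ray (fun e => S (e + d)) c'.
Proof.
  intros [Hc H]; destruct c as [x| |]; [|now destruct Hc|].
  - exists (Finite (x - d)); split; [discriminate|]; intros e; rewrite H; simpl; lra.
  - exists m_infty; split; [discriminate|]; intros e; rewrite H; simpl; tauto.
Qed.

Lemma is_up_ray_m_infty (S : R -> Prop) (c : Rbar) :
  is_up_ray S c -> Rbar_locally m_infty S -> c = m_infty.
Proof.
  intros [Hc H] [T HT]; destruct c as [x| |]; [exfalso|now destruct Hc|reflexivity].
  assert (Hx : S (Rmin T x - 1)) by (apply HT; pose proof (Rmin_l T x); lra).
  apply H in Hx; simpl in Hx; pose proof (Rmin_r T x); lra.
Qed.

Lemma affine_le_eventually (f : R -> R) (a y : R) :
  0 < a -> (forall t, f t = a * t + f 0) -> Rbar_locally m_infty (fun t => f t <= y).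
Proof.
  intros Ha Hf; exists ((y - f 0) / a); intros t Ht; rewrite Hf.
  apply Rmult_lt_compat_l with (r := a) in Ht; [|exact Ha].
  replace (a * ((y - f 0) / a)) with (y - f 0) in Ht by (field; lra); lra.
Qed.

Definition eventually_affine (f : R -> R) : Prop :=
  exists T a b, forall t, T <= t -> f t = a * t + b.

Lemma eventually_affine_lincomb (u v : R -> R) (a b c : R) :
  eventually_affine u -> eventually_affine v ->
  eventually_affine (fun t => a * u t + b * v t + c).
Proof.
  intros [T1 [a1 [b1 H1]]] [T2 [a2 [b2 H2]]].
  exists (Rmax T1 T2), (a * a1 + b * a2), (a * b1 + b * b2 + c); intros t Ht.
  pose proof (Rmax_l T1 T2); pose proof (Rmax_r T1 T2).
  rewrite H1, H2 by lra; ring.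
Qed.

Lemma eventually_affine_max (u : R -> R) (c : R) :
  eventually_affine u -> eventually_affine (fun t => Rmax (u t) c).
Proof.
  intros [T [a [b H]]].
  destruct (Rtotal_order a 0) as [Ha|[Ha|Ha]].
  - exists (Rmax T ((c - b) / a)), 0, c; intros t Ht.
    pose proof (Rmax_l T ((c - b) / a)); pose proof (Rmax_r T ((c - b) / a)).
    assert (Hle : a * t <= a * ((c - b) / a)) by (apply Rmult_le_compat_neg_l; lra).
    replace (a * ((c - b) / a)) with (c - b) in Hle by (field; lra).
    rewrite H, Rmax_right by lra; ring.
  - exists T, 0, (Rmax b c); intros t Ht; rewrite H by exact Ht; subst a.
    rewrite Rmult_0_l, Rplus_0_l; ring.
  - exists (Rmax T ((c - b) / a)), a, b; intros t Ht.
    pose proof (Rmax_l T ((c - b) / a)); pose proof (Rmax_r T ((c - b) / a)).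
    assert (Hle : a * ((c - b) / a) <= a * t) by (apply Rmult_le_compat_l; lra).
    replace (a * ((c - b) / a)) with (c - b) in Hle by (field; lra).
    rewrite H, Rmax_left by lra; reflexivity.
Qed.

Lemma eventually_affine_nondecreasing (f : R -> R) (c : R) :
  eventually_affine f -> (forall t, c <= f t) ->
  exists T, forall s t, T <= s <= t -> f s <= f t.
Proof.
  intros [T [a [b H]]] Hlb.
  assert (Ha : 0 <= a).
  { destruct (Rle_dec 0 a) as [|Ha]; [assumption|exfalso].
    pose proof (Rmax_l T ((c - 1 - b) / a)); pose proof (Rmax_r T ((c - 1 - b) / a)).
    set (t := Rmax T ((c - 1 - b) / a)) in *.
    assert (Hle : a * t <= a * ((c - 1 - b) / a)) by (apply Rmult_le_compat_neg_l; lra).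
    replace (a * ((c - 1 - b) / a)) with (c - 1 - b) in Hle by (field; lra).
    specialize (Hlb t); rewrite H in Hlb by assumption; lra. }
  exists T; intros s t [Hs Hst]; rewrite !H by lra.
  apply Rplus_le_compat_r, Rmult_le_compat_l; assumption.
Qed.

Lemma continuity_max (u : R -> R) (c : R) :
  continuity u -> continuity (fun t => Rmax (u t) c).
Proof.
  intros Hu; apply (continuity_comp u (fun x => Rmax x c) Hu).
  intros x eps Heps; exists eps; split; [exact Heps|]; intros y [_ Hy].
  simpl in *; unfold R_dist in *; eapply Rle_lt_trans; [|exact Hy].
  unfold Rmax; destruct (Rle_dec y c), (Rle_dec x c); unfold Rabs;
  repeat destruct Rcase_abs; lra.
Qed.

Definition tame (f : R -> R) : Prop :=
  continuity f /\ eventually_affine f /\ eventually_affine (fun t => f (- t)).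

Lemma tame_ext (f g : R -> R) : (forall t, f t = g t) -> tame f -> tame g.
Proof.
  intros Hfg [Hc [[T1 [a1 [b1 H1]]] [T2 [a2 [b2 H2]]]]]; split; [|split].
  - intros x; apply continuity_pt_ext with f; [exact Hfg|apply Hc].
  - exists T1, a1, b1; intros t Ht; rewrite <- Hfg; auto.
  - exists T2, a2, b2; intros t Ht; rewrite <- Hfg; auto.
Qed.

Lemma tame_id : tame (fun t => t).
Proof.
  split; [exact (derivable_continuous _ derivable_id)|split].
  - exists 0, 1, 0; intros; ring.
  - exists 0, (-1), 0; intros; ring.
Qed.

Lemma tame_lincomb (u v : R -> R) (a b c : R) :
  tame u -> tame v -> tame (fun t => a * u t + b * v t + c).
Proof.
  intros [Hu [Hu1 Hu2]] [Hv [Hv1 Hv2]]; split; [|split].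
  - apply continuity_plus; [apply continuity_plus; apply continuity_scal; assumption|].
    apply continuity_const; intros ? ?; reflexivity.
  - apply eventually_affine_lincomb; assumption.
  - apply (eventually_affine_lincomb (fun t => u (- t)) (fun t => v (- t))); assumption.
Qed.

Lemma tame_max (u : R -> R) (c : R) : tame u -> tame (fun t => Rmax (u t) c).
Proof.
  intros [Hu [Hu1 Hu2]]; split; [|split].
  - apply continuity_max; assumption.
  - apply eventually_affine_max; assumption.
  - apply (eventually_affine_max (fun t => u (- t))); assumption.
Qed.

Lemma tame_irate (psi mu : R) (u : R -> R) :
  tame u -> tame (fun t => irate psi mu (u t)).
Proof.
  intros Hu; apply tame_max.
  apply tame_ext with (fun t => psi * u t + 0 * u t + 0); [intros; ring|].
  apply tame_lincomb; assumption.
Qed.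

Lemma tame_min_attained (f : R -> R) (c : R) :
  tame f -> (forall t, c <= f t) -> exists s, forall t, f s <= f t.
Proof.
  intros [Hc [Hpos Hneg]] Hlb.
  destruct (eventually_affine_nondecreasing f c Hpos Hlb) as [T1 H1].
  destruct (eventually_affine_nondecreasing _ c Hneg (fun t => Hlb (- t))) as [T2 H2].
  set (T := Rmax 0 (Rmax T1 T2)).
  assert (HT : 0 <= T /\ T1 <= T /\ T2 <= T).
  { unfold T; pose proof (Rmax_l 0 (Rmax T1 T2)); pose proof (Rmax_r 0 (Rmax T1 T2)).
    pose proof (Rmax_l T1 T2); pose proof (Rmax_r T1 T2); lra. }
  destruct (continuity_ab_min f (- T) T) as [s [Hs _]]; [lra|intros; apply Hc|].
  exists s; intros t.
  destruct (Rle_dec T t) as [Ht|Ht].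
  { apply Rle_trans with (f T); [apply Hs; lra|apply H1; lra]. }
  destruct (Rle_dec t (- T)) as [Ht'|Ht']; [|apply Hs; lra].
  apply Rle_trans with (f (- T)); [apply Hs; lra|].
  rewrite <- (Ropp_involutive t); apply H2; lra.
Qed.

Lemma tame_range_up_ray (f : R -> R) (y0 : R) :
  tame f -> (forall y, y0 <= y -> exists t, f t = y) ->
  exists c, is_up_ray (fun y => exists t, f t = y) c.
Proof.
  intros Hf Hy0.
  assert (Hup : forall y y', (exists t, f t = y) -> y <= y' -> exists t, f t = y').
  { intros y y' [t Ht] Hyy'; destruct (Rle_dec y0 y') as [|Hy']; [now apply Hy0|].
    destruct (Hy0 y0 (Rle_refl y0)) as [t0 Ht0].
    destruct (IVT_gen f t t0 y' (proj1 Hf)) as [s [_ Hs]]; [|now exists s].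
    rewrite Ht, Ht0; pose proof (Rmin_l y y0); pose proof (Rmax_r y y0); lra. }
  destruct (classic (forall y, exists t, f t = y)) as [Hall|Hnot].
  - exists m_infty; split; [discriminate|]; intros e; split; [constructor|intros; apply Hall].
  - apply not_all_ex_not in Hnot as [e0 He0].
    assert (Hlb : forall t, e0 <= f t).
    { intros t; destruct (Rle_dec e0 (f t)) as [|Hlt]; [assumption|exfalso].
      apply He0, Hup with (f t); [now exists t|lra]. }
    destruct (tame_min_attained f e0 Hf Hlb) as [s Hs].
    exists (Finite (f s)); split; [discriminate|]; intros e; simpl; split.
    + intros [t <-]; apply Hs.
    + intros He; apply Hup with (f s); [now exists s|exact He].
Qed.

Lemma irate_unconstrained (psi mu x : R) : - mu <= psi * x -> irate psi mu x = psi * x.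
Proof. intros H; unfold irate; apply Rmax_left; lra. Qed.

Lemma irate_at_elb (psi mu x : R) : psi * x <= - mu -> irate psi mu x = - mu.
Proof. intros H; unfold irate; apply Rmax_right; lra. Qed.

Section ReducedSystem.

Variables k1 k2 a b sigma psi mu e2 : R.

Definition lhs1 (pi1 pi2 : R) : R := k1 * pi1 + sigma * irate psi mu pi1 - a * pi2.
Definition lhs2 (pi1 pi2 : R) : R := - b * pi1 + k2 * pi2 + sigma * irate psi mu pi2.

Definition solvable (e1 : R) : Prop := exists pi1 pi2, lhs1 pi1 pi2 = e1 /\ lhs2 pi1 pi2 = e2.

Hypotheses (Hsigma : 0 < sigma) (Hpsi : 0 < psi) (Hmu : 0 < mu)
  (Ha : 0 <= a) (Hb : 0 <= b)
  (Hk1 : 0 < k1 + sigma * psi) (Hk2 : 0 < k2 + sigma * psi)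
  (Hdet : 0 < (k1 + sigma * psi) * (k2 + sigma * psi) - a * b)
  (He2 : 0 <= e2).

Lemma solvable_nonneg (e : R) : 0 <= e -> solvable e.
Proof.
  intros He; set (D := (k1 + sigma * psi) * (k2 + sigma * psi) - a * b) in Hdet.
  set (pi1 := ((k2 + sigma * psi) * e + a * e2) / D).
  set (pi2 := (b * e + (k1 + sigma * psi) * e2) / D).
  assert (Hpi1 : 0 <= pi1) by (apply Rdiv_le_0_compat; [nra|exact Hdet]).
  assert (Hpi2 : 0 <= pi2) by (apply Rdiv_le_0_compat; [nra|exact Hdet]).
  exists pi1, pi2; unfold lhs1, lhs2; rewrite !irate_unconstrained by nra.
  unfold pi1, pi2, D in *; split; field; lra.
Qed.

Definition pi1_on_curve (pi2 : R) : R := (k2 * pi2 + sigma * irate psi mu pi2 - e2) / b.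

Definition lhs1_on_curve (pi2 : R) : R := lhs1 (pi1_on_curve pi2) pi2.

Lemma solvable_iff_lhs1_on_curve (e : R) : 0 < b ->
  solvable e <-> exists pi2, lhs1_on_curve pi2 = e.
Proof.
  intros Hb0; unfold lhs1_on_curve; split.
  - intros [pi1 [pi2 [H1 H2]]]; exists pi2.
    replace (pi1_on_curve pi2) with pi1; [exact H1|].
    unfold pi1_on_curve; rewrite <- H2; unfold lhs2; field; lra.
  - intros [pi2 H]; exists (pi1_on_curve pi2), pi2; split; [exact H|].
    unfold lhs2, pi1_on_curve; field; lra.
Qed.

Lemma tame_lhs1_on_curve : tame lhs1_on_curve.
Proof.
  assert (Hpi1 : tame pi1_on_curve).
  { apply tame_ext with (fun t => (k2 / b) * t + (sigma / b) * irate psi mu t + - e2 / b).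
    { intros t; unfold pi1_on_curve, Rdiv; ring. }
    apply tame_lincomb; [exact tame_id|apply tame_irate, tame_id]. }
  apply tame_ext with (fun t =>
    1 * (k1 * pi1_on_curve t + sigma * irate psi mu (pi1_on_curve t) + 0) + (- a) * t + 0).
  { intros t; unfold lhs1_on_curve, lhs1; ring. }
  apply tame_lincomb; [|exact tame_id].
  apply tame_lincomb; [exact Hpi1|apply tame_irate, Hpi1].
Qed.

Lemma tame_lhs1_at_zero : tame (fun pi1 => lhs1 pi1 0).
Proof.
  apply tame_ext with (fun t => k1 * t + sigma * irate psi mu t + 0).
  { intros t; unfold lhs1; ring. }
  apply tame_lincomb; [exact tame_id|apply tame_irate, tame_id].
Qed.

Let pi2_max : R := e2 / (k2 + sigma * psi).

Lemma pi2_max_nonneg : 0 <= pi2_max.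
Proof. apply Rdiv_le_0_compat; [exact He2|exact Hk2]. Qed.

Lemma lhs2_pi2_max (pi1 : R) : b = 0 -> lhs2 pi1 pi2_max = e2.
Proof.
  intros Hb0; unfold lhs2; rewrite irate_unconstrained.
  - unfold pi2_max; rewrite Hb0; field; apply Rgt_not_eq, Hk2.
  - pose proof (Rmult_le_pos _ _ (Rlt_le _ _ Hpsi) pi2_max_nonneg); lra.
Qed.

Lemma le_pi2_max (pi1 pi2 : R) : b = 0 -> lhs2 pi1 pi2 = e2 -> pi2 <= pi2_max.
Proof.
  intros Hb0 H; unfold lhs2 in H; rewrite Hb0 in H.
  pose proof (Rmult_le_compat_l sigma _ _ (Rlt_le _ _ Hsigma) (Rmax_l (psi * pi2) (- mu))).
  fold (irate psi mu pi2) in *.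
  unfold pi2_max; apply Rmult_le_reg_l with (k2 + sigma * psi); [exact Hk2|].
  replace ((k2 + sigma * psi) * (e2 / (k2 + sigma * psi))) with e2
    by (field; apply Rgt_not_eq, Hk2).
  lra.
Qed.

Lemma solvable_up_ray : exists c, is_up_ray solvable c.
Proof.
  destruct Hb as [Hb0|Hb0].
  - destruct (tame_range_up_ray lhs1_on_curve 0 tame_lhs1_on_curve) as [c Hc].
    { intros y Hy; apply solvable_iff_lhs1_on_curve; [exact Hb0|now apply solvable_nonneg]. }
    exists c; apply is_up_ray_ext with (2 := Hc).
    intros e; symmetry; apply solvable_iff_lhs1_on_curve, Hb0.
  - destruct (tame_range_up_ray (fun pi1 => lhs1 pi1 0) 0 tame_lhs1_at_zero) as [c Hc].
    { intros y Hy; exists (y / (k1 + sigma * psi)); unfold lhs1.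
      rewrite irate_unconstrained; [field; lra|].
      assert (0 <= y / (k1 + sigma * psi)) by (apply Rdiv_le_0_compat; lra); nra. }
    destruct (is_up_ray_shift _ _ (a * pi2_max) Hc) as [c' Hc'].
    exists c'; apply is_up_ray_ext with (2 := Hc'); intros e; split.
    + intros [pi1 H1]; exists pi1, pi2_max; split; [|now apply lhs2_pi2_max].
      revert H1; unfold lhs1; lra.
    + intros [pi1 [pi2 [H1 H2]]].
      apply (is_up_ray_up _ _ (e + a * pi2) _ Hc).
      * exists pi1; rewrite <- H1; unfold lhs1; ring.
      * pose proof (le_pi2_max pi1 pi2 (eq_sym Hb0) H2); nra.
Qed.

Lemma solvable_eventually_at_m_infty :
  0 < k1 -> 0 < k2 -> 0 < k1 * k2 - a * b -> Rbar_locally m_infty solvable.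
Proof.
  intros Hk1p Hk2p HD.
  destruct Hb as [Hb0|Hb0].
  - set (D := k1 * k2 - a * b) in HD.
    set (pi1 := fun e => (k2 * (e + sigma * mu) + a * (e2 + sigma * mu)) / D).
    set (pi2 := fun e => (b * (e + sigma * mu) + k1 * (e2 + sigma * mu)) / D).
    assert (H1 : Rbar_locally m_infty (fun e => psi * pi1 e <= - mu)).
    { apply affine_le_eventually with (psi * k2 / D); [apply Rdiv_lt_0_compat; nra|].
      intros e; unfold pi1; field; lra. }
    assert (H2 : Rbar_locally m_infty (fun e => psi * pi2 e <= - mu)).
    { apply affine_le_eventually with (psi * b / D); [apply Rdiv_lt_0_compat; nra|].
      intros e; unfold pi2; field; lra. }
    apply filter_imp with (2 := filter_and _ _ H1 H2).
    intros e [He1 He2']; exists (pi1 e), (pi2 e); unfold lhs1, lhs2.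
    rewrite !irate_at_elb by assumption; unfold pi1, pi2, D in *; split; field; lra.
  - set (pi1 := fun e => (e + sigma * mu + a * pi2_max) / k1).
    assert (H1 : Rbar_locally m_infty (fun e => psi * pi1 e <= - mu)).
    { apply affine_le_eventually with (psi / k1); [apply Rdiv_lt_0_compat; lra|].
      intros e; unfold pi1; field; lra. }
    apply filter_imp with (2 := H1); intros e He.
    exists (pi1 e), pi2_max; split; [|now apply lhs2_pi2_max].
    unfold lhs1; rewrite irate_at_elb by exact He; unfold pi1; field; lra.
Qed.

End ReducedSystem.

Section Coefficients.

Variables beta sigma lambda p q M Mf N : R.

(* The coefficients of the reduced system factor through kappa at the eigenvalues 1 and
   p + q - 1 of the transition matrix; see K_det. *)
Definition kappa (r : R) : R :=
  (1 - M * r) * (1 - Mf * beta * r) / lambda - sigma * N * r.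

Definition coupling : R :=
  (M + Mf * beta - M * (Mf * beta) * (p + q)) / lambda + sigma * N.

Definition K11 : R := kappa p + M * (Mf * beta) * (1 - p) * (1 - q) / lambda.
Definition K22 : R := kappa q + M * (Mf * beta) * (1 - p) * (1 - q) / lambda.

Definition output_gap (pi pie : R) : R := (pi - Mf * beta * pie) / lambda.

Hypotheses (Hlambda : 0 < lambda) (Hsigma : 0 < sigma) (HN : 0 <= N)
  (HM : 0 <= M <= 1) (Hm : 0 <= Mf * beta <= 1) (Hp : p <= 1) (Hq : q <= 1).

Lemma lhs1_output_gap (psi mu pi1 pi2 : R) :
  let x1 := output_gap pi1 (p * pi1 + (1 - p) * pi2) in
  let x2 := output_gap pi2 ((1 - q) * pi1 + q * pi2) in
  lhs1 K11 ((1 - p) * coupling) sigma psi mu pi1 pi2 =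
  x1 - M * (p * x1 + (1 - p) * x2) + sigma * (irate psi mu pi1 - N * (p * pi1 + (1 - p) * pi2)).
Proof. unfold lhs1, K11, kappa, coupling, output_gap; simpl; field; lra. Qed.

Lemma lhs2_output_gap (psi mu pi1 pi2 : R) :
  let x1 := output_gap pi1 (p * pi1 + (1 - p) * pi2) in
  let x2 := output_gap pi2 ((1 - q) * pi1 + q * pi2) in
  lhs2 K22 ((1 - q) * coupling) sigma psi mu pi1 pi2 =
  x2 - M * ((1 - q) * x1 + q * x2) + sigma * (irate psi mu pi2 - N * ((1 - q) * pi1 + q * pi2)).
Proof. unfold lhs2, K22, kappa, coupling, output_gap; simpl; field; lra. Qed.

Lemma BRE_exists_iff_solvable (psi mu eps1 eps2 : R) :
  BRE_exists beta sigma lambda mu psi p q M Mf N eps1 eps2 <->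
  solvable K11 K22 ((1 - p) * coupling) ((1 - q) * coupling) sigma psi mu eps2 eps1.
Proof.
  unfold BRE_exists, is_BRE, solvable; split.
  - intros [x1 [pi1 [x2 [pi2 [H1 [H2 [H3 H4]]]]]]]; exists pi1, pi2.
    rewrite lhs1_output_gap, lhs2_output_gap; simpl.
    replace (output_gap pi1 _) with x1 by (unfold output_gap; field_simplify_eq; lra).
    replace (output_gap pi2 _) with x2 by (unfold output_gap; field_simplify_eq; lra).
    split; lra.
  - intros [pi1 [pi2 [H1 H2]]].
    rewrite lhs1_output_gap in H1; rewrite lhs2_output_gap in H2; simpl in H1, H2.
    exists (output_gap pi1 (p * pi1 + (1 - p) * pi2)), pi1,
      (output_gap pi2 ((1 - q) * pi1 + q * pi2)), pi2.
    repeat split; try lra; unfold output_gap; field; lra.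
Qed.

Lemma kappa_one_le (r : R) : r <= 1 -> kappa 1 <= kappa r.
Proof.
  intros Hr; unfold kappa, Rdiv.
  assert (Hprod : (1 - M * 1) * (1 - Mf * beta * 1) <= (1 - M * r) * (1 - Mf * beta * r))
    by (apply Rmult_le_compat; nra).
  assert (HsN : 0 <= sigma * N) by nra.
  assert (Hinv : 0 < / lambda) by (apply Rinv_0_lt_compat; exact Hlambda).
  nra.
Qed.

Lemma kappa_one_add_pos (psi : R) : N < psi -> 0 < kappa 1 + sigma * psi.
Proof.
  intros HNpsi; unfold kappa.
  assert (0 <= (1 - M * 1) * (1 - Mf * beta * 1) / lambda)
    by (apply Rdiv_le_0_compat; [apply Rmult_le_pos|]; lra).
  nra.
Qed.

Lemma coupling_nonneg : 0 <= coupling.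
Proof.
  unfold coupling.
  assert (0 <= M * (Mf * beta)) by (apply Rmult_le_pos; lra).
  assert (0 <= M + Mf * beta - M * (Mf * beta) * (p + q)).
  { assert (0 <= M * (1 - Mf * beta)) by (apply Rmult_le_pos; lra).
    assert (0 <= Mf * beta * (1 - M)) by (apply Rmult_le_pos; lra). nra. }
  assert (0 <= (M + Mf * beta - M * (Mf * beta) * (p + q)) / lambda)
    by (apply Rdiv_le_0_compat; lra).
  nra.
Qed.

Lemma cross_term_nonneg : 0 <= M * (Mf * beta) * (1 - p) * (1 - q) / lambda.
Proof.
  apply Rdiv_le_0_compat; [|exact Hlambda].
  apply Rmult_le_pos; [apply Rmult_le_pos; [apply Rmult_le_pos|]|]; lra.
Qed.

Lemma kappa_one_le_K11 : kappa 1 <= K11.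
Proof. pose proof (kappa_one_le p Hp); pose proof cross_term_nonneg; unfold K11; lra. Qed.

Lemma kappa_one_le_K22 : kappa 1 <= K22.
Proof. pose proof (kappa_one_le q Hq); pose proof cross_term_nonneg; unfold K22; lra. Qed.

Lemma K_det (s : R) :
  (K11 + s) * (K22 + s) - (1 - p) * coupling * ((1 - q) * coupling) =
  (kappa 1 + s) * (kappa (p + q - 1) + s).
Proof. unfold K11, K22, kappa, coupling; field; lra. Qed.

Lemma K_det_pos (s : R) : 0 < kappa 1 + s ->
  0 < (K11 + s) * (K22 + s) - (1 - p) * coupling * ((1 - q) * coupling).
Proof.
  intros Hs; rewrite K_det; pose proof (kappa_one_le (p + q - 1) ltac:(lra)).
  apply Rmult_lt_0_compat; lra.
Qed.

Lemma kappa_one_pos :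
  (M - 1) * (1 - Mf * beta) + lambda * sigma * N < 0 -> 0 < kappa 1.
Proof.
  intros H; unfold kappa.
  replace ((1 - M * 1) * (1 - Mf * beta * 1) / lambda - sigma * N * 1)
    with (- ((M - 1) * (1 - Mf * beta) + lambda * sigma * N) / lambda) by (field; lra).
  apply Rdiv_lt_0_compat; lra.
Qed.

Lemma reduced_coefficients_admissible (psi : R) : N < psi ->
  0 <= (1 - p) * coupling /\ 0 <= (1 - q) * coupling /\
  0 < K11 + sigma * psi /\ 0 < K22 + sigma * psi /\
  0 < (K11 + sigma * psi) * (K22 + sigma * psi) - (1 - p) * coupling * ((1 - q) * coupling).
Proof.
  intros HNpsi; pose proof (kappa_one_add_pos psi HNpsi).
  pose proof kappa_one_le_K11; pose proof kappa_one_le_K22; pose proof coupling_nonneg.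
  repeat split; try nra; apply K_det_pos; lra.
Qed.

Lemma reduced_coefficients_pos :
  (M - 1) * (1 - Mf * beta) + lambda * sigma * N < 0 ->
  0 < K11 /\ 0 < K22 /\ 0 < K11 * K22 - (1 - p) * coupling * ((1 - q) * coupling).
Proof.
  intros Hcond; pose proof (kappa_one_pos Hcond).
  pose proof kappa_one_le_K11; pose proof kappa_one_le_K22.
  pose proof (K_det_pos 0 ltac:(lra)) as Hdet; rewrite !Rplus_0_r in Hdet.
  repeat split; lra.
Qed.

End Coefficients.

Theorem proposition4 (beta sigma lambda mu psi p q M Mf N eps2 : R) :
  0 < beta < 1 -> 0 < sigma -> 0 < lambda -> 0 < mu -> 1 < psi ->
  0 < p <= 1 -> 0 < q <= 1 ->
  0 < M <= 1 -> 0 < Mf <= 1 -> 0 < N <= 1 ->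
  Rmin M (Rmin Mf N) < 1 ->
  0 <= eps2 ->
  exists ebar : Rbar,
    ebar <> p_infty /\
    (forall eps1 : R,
        BRE_exists beta sigma lambda mu psi p q M Mf N eps1 eps2 <->
        Rbar_le ebar (Finite eps1)) /\
    ((M - 1) * (1 - Mf * beta) + lambda * sigma * N < 0 -> ebar = m_infty).
Proof.
  intros Hbeta Hsigma Hlambda Hmu Hpsi Hp Hq HM HMf HN _ He2.
  assert (Hm : 0 <= Mf * beta <= 1) by (split; nra).
  assert (HN0 : 0 <= N) by lra. assert (HM1 : 0 <= M <= 1) by lra.
  assert (Hp1 : p <= 1) by lra. assert (Hq1 : q <= 1) by lra.
  destruct (reduced_coefficients_admissible beta sigma lambda p q M Mf N
              Hlambda Hsigma HN0 HM1 Hm Hp1 Hq1 psi ltac:(lra))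
    as (HA & HB & Hk1 & Hk2 & Hdet).
  destruct (solvable_up_ray _ _ _ _ sigma psi mu eps2
              Hsigma ltac:(lra) Hmu HA HB Hk1 Hk2 Hdet He2) as [ebar [Hebar Hray]].
  exists ebar; split; [exact Hebar|split].
  - intros eps1; rewrite BRE_exists_iff_solvable by exact Hlambda; apply Hray.
  - intros Hcond; apply (is_up_ray_m_infty _ _ (conj Hebar Hray)).
    destruct (reduced_coefficients_pos beta sigma lambda p q M Mf N
                Hlambda Hsigma HN0 HM1 Hm Hp1 Hq1 Hcond) as (Hk1p & Hk2p & Hdetp).
    exact (solvable_eventually_at_m_infty _ _ _ _ sigma psi mu eps2
             ltac:(lra) Hmu HB Hk2 He2 Hk1p Hk2p Hdetp).
Qed.
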